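(* Work in $\mathbf{Sets}$ with a set $S$ and the state monad $T$. Let $(X,h)$ be a $T$-algebra, let $Y=\{h(s'\mapsto (s,x)) \mid s\in S, x\in X\}\subseteq X$, and let $e_X:S\times X\to Y$ be the surjection $(s,x)\mapsto h(s'\mapsto (s,x))$. Let $e_X^*:X\to Y^S$ be its transpose, $e_X^*(x)=\big(s\mapsto h(s'\mapsto (s,x))\big)$. Then $e_X^*$ is a bijection, with inverse $y\mapsto h(s\mapsto (s,y[s]))$.
   Context: $T$ is the monad on $\mathbf{Sets}$ given by $TX=(S\times X)^S$, with unit $\eta_X(x)=(s\mapsto(s,x))$ and multiplication $\mu_X$ sending $s\mapsto (c[s], s'\mapsto (c'[s,s'],x[s,s']))$ to $s\mapsto (c'[s,c[s]],x[s,c[s]])$. A $T$-algebra is a pair $(X,h)$ with $h:TX\to X$ satisfying $h\circ Th=h\circ\mu_X$ and $h\circ\eta_X=\mathrm{id}_X$. Elements of $TX$ are written as maps $s\mapsto(\cdot,\cdot)$ from $S$ to $S\times X$. *)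

From Stdlib Require Import FunctionalExtensionality.

Definition T (S X : Type) : Type := S -> S * X.

Definition eta {S X : Type} (x : X) : T S X := fun s => (s, x).

Definition Tmap {S X Z : Type} (f : X -> Z) (t : T S X) : T S Z :=
  fun s => (fst (t s), f (snd (t s))).

Definition mu {S X : Type} (t : T S (T S X)) : T S X :=
  fun s => snd (t s) (fst (t s)).

Definition is_T_algebra {S X : Type} (h : T S X -> X) : Prop :=
  (forall t : T S (T S X), h (Tmap h t) = h (mu t)) /\
  (forall x : X, h (eta x) = x).

Definition Yset {S X : Type} (h : T S X -> X) : Type :=
  { y : X | exists (s : S) (x : X), y = h (fun _ : S => (s, x)) }.

Definition e_X {S X : Type} (h : T S X -> X) (p : S * X) : Yset h :=
  exist _ (h (fun _ : S => (fst p, snd p)))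
        (ex_intro _ (fst p) (ex_intro _ (snd p) eq_refl)).

Definition e_X_star {S X : Type} (h : T S X -> X) (x : X) : S -> Yset h :=
  fun s => e_X h (s, x).

Definition e_X_star_inv {S X : Type} (h : T S X -> X) (y : S -> Yset h) : X :=
  h (fun s => (s, proj1_sig (y s))).

Definition bijective {A B : Type} (f : A -> B) : Prop :=
  exists g : B -> A, (forall a, g (f a) = a) /\ (forall b, f (g b) = b).

(* Both directions rest on one consequence of the multiplication law: the
   algebra map absorbs an inner application of h, evaluated at the state
   chosen by the outer layer.  For x, this gives h (s |-> (s, h (s' |-> (s, x))))
   = h (s |-> (s, x)) = x by the unit law.  For y, it shows that "setting the
   state to s" is the identity on Y (a second put overrides the first), so
   e_X^* (h (s |-> (s, y[s]))) recovers each component y[s]. *)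
From Stdlib Require Import FunctionalExtensionality ProofIrrelevance.

Section StateAlgebra.

Variables (S X : Type) (h : T S X -> X).
Hypothesis Hh : is_T_algebra h.

Lemma T_algebra_flatten (f : S -> S) (u : S -> T S X) :
  h (fun s => (f s, h (u s))) = h (fun s => u s (f s)).
Proof. exact (proj1 Hh (fun s => (f s, u s))). Qed.

Lemma T_algebra_put_put (s : S) (y : Yset h) :
  h (fun _ => (s, proj1_sig y)) = proj1_sig y.
Proof.
  destruct y as [y [a [x ->]]]; simpl.
  exact (T_algebra_flatten (fun _ => s) (fun _ _ => (a, x))).
Qed.

Lemma e_X_starK (x : X) : e_X_star_inv h (e_X_star h x) = x.
Proof.
  unfold e_X_star_inv, e_X_star, e_X; simpl.
  rewrite (T_algebra_flatten (fun s => s) (fun s _ => (s, x))).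
  exact (proj2 Hh x).
Qed.

Lemma e_X_star_invK (y : S -> Yset h) : e_X_star h (e_X_star_inv h y) = y.
Proof.
  apply functional_extensionality; intro s.
  apply eq_sig_hprop; [intros; apply proof_irrelevance |].
  unfold e_X_star, e_X_star_inv, e_X; simpl.
  rewrite (T_algebra_flatten (fun _ => s) (fun _ s'' => (s'', proj1_sig (y s'')))).
  apply T_algebra_put_put.
Qed.

End StateAlgebra.

Theorem mainTheorem2 (S X : Type) (h : T S X -> X) (Hh : is_T_algebra h) :
  bijective (e_X_star h) /\
  (forall x : X, e_X_star_inv h (e_X_star h x) = x) /\
  (forall y : S -> Yset h, e_X_star h (e_X_star_inv h y) = y).
Proof.
  pose proof (e_X_starK S X h Hh) as K; pose proof (e_X_star_invK S X h Hh) as invK.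
  split; [exists (e_X_star_inv h) |]; split; assumption.
Qed.
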